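(* Let $p>2$ be prime, let $\mathcal{C}$ be a $\mathbb{Z}_p\mathbb{Z}_{p^2}$-additive code of type $(\alpha,\beta;\gamma,\delta;\kappa)$ with generator matrix $\mathcal{G}$, and let $C=\Phi(\mathcal{C})$ with $\ker(C)=\gamma+2\delta-\bar k$, where $\bar k\in\{1,2,\ldots,\delta\}$. Then there exists a set $\{\mathbf{v}_1,\ldots,\mathbf{v}_{\bar k}\}$ of rows of order $p^2$ in $\mathcal{G}$ with $\Phi(\mathbf{v}_i)\notin K(C)$ such that $$C=\bigcup_{a_1,\ldots,a_{\bar k}\in\mathbb{Z}_p}\left(K(C)+\Phi\left(\sum_{i=1}^{\bar k}a_i\mathbf{v}_i\right)\right).$$
   Context: A $\mathbb{Z}_p\mathbb{Z}_{p^2}$-additive code $\mathcal{C}$ is a subgroup of $\mathbb{Z}_p^\alpha\times\mathbb{Z}_{p^2}^\beta$; as a group $\mathcal{C}\cong\mathbb{Z}_p^\gamma\times\mathbb{Z}_{p^2}^\delta$, and if $\kappa$ is the $\mathbb{Z}_p$-dimension of the projection onto the first $\alpha$ coordinates of the subcode of codewords of order dividing $p$, $\mathcal{C}$ has type $(\alpha,\beta;\gamma,\delta;\kappa)$. A generator matrix $\mathcal{G}$ has rows $\mathbf{u}_1,\ldots,\mathbf{u}_\gamma$ of order $p$ and rows of order $p^2$, $\delta$ in number, such that every codeword is uniquely $\sum\lambda_i\mathbf{u}_i+\sum\nu_j\mathbf{v}_j$ ($\lambda_i\in\mathbb{Z}_p$, $\nu_j\in\mathbb{Z}_{p^2}$).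 The Gray map is $\phi(\theta)=\theta''(1,\ldots,1)+\theta'(0,1,\ldots,p-1)$ for $\theta=\theta''p+\theta'\in\mathbb{Z}_{p^2}$, $\theta',\theta''\in\{0,\ldots,p-1\}$, and $\Phi(\mathbf{x},\mathbf{y})=(\mathbf{x},\phi(y_1),\ldots,\phi(y_\beta))$. The kernel of $C\subseteq\mathbb{Z}_p^n$ is $K(C)=\{\mathbf{x}\in\mathbb{Z}_p^n\mid C+\mathbf{x}=C\}$, a $\mathbb{Z}_p$-linear space, and $\ker(C)$ is its dimension. Elements $a_i\in\mathbb{Z}_p$ are identified with integers in $\{0,\ldots,p-1\}$ when multiplying vectors. *)

From HB Require Import structures.
From mathcomp Require Import all_boot all_order all_algebra.
Set Implicit Arguments. Unset Strict Implicit. Unset Printing Implicit Defensive.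
Import Order.TTheory GRing.Theory Num.Theory.
Local Open Scope ring_scope.

Definition amb (p a b : nat) : finType :=
  ('rV['F_p]_a * 'rV['Z_(p ^ 2)]_b)%type.

Definition aadd p a b (x y : amb p a b) : amb p a b := (x.1 + y.1, x.2 + y.2).
Definition aopp p a b (x : amb p a b) : amb p a b := (- x.1, - x.2).
Definition azero p a b : amb p a b := (0, 0).
Definition anat p a b (x : amb p a b) (n : nat) : amb p a b := (x.1 *+ n, x.2 *+ n).

Definition add_order p a b (x : amb p a b) (n : nat) : Prop :=
  (0 < n)%N /\ anat x n = azero p a b /\
  (forall m, (0 < m)%N -> (m < n)%N -> anat x m <> azero p a b).

Definition additive_code p a b (C : {set amb p a b}) : Prop :=
  azero p a b \in C /\ (forall x y, x \in C -> y \in C -> aadd x (aopp y) \in C).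

Definition gen_comb p a b g d (u : 'I_g -> amb p a b) (v : 'I_d -> amb p a b)
  (lam : {ffun 'I_g -> 'F_p}) (nu : {ffun 'I_d -> 'Z_(p ^ 2)}) : amb p a b :=
  aadd (\big[@aadd p a b/azero p a b]_(i < g) anat (u i) (val (lam i)))
       (\big[@aadd p a b/azero p a b]_(j < d) anat (v j) (val (nu j))).

Definition generator_matrix p a b (C : {set amb p a b}) g d
  (u : 'I_g -> amb p a b) (v : 'I_d -> amb p a b) : Prop :=
  (forall i, add_order (u i) p) /\
  (forall j, add_order (v j) (p ^ 2)) /\
  (forall c, c \in C <-> exists lam nu, c = gen_comb u v lam nu) /\
  (forall l1 n1 l2 n2, gen_comb u v l1 n1 = gen_comb u v l2 n2 -> l1 = l2 /\ n1 = n2).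

(* kappa: Z_p-dimension of the projection on the first alpha coordinates of the
   subcode of codewords of order dividing p (dimension of an F_p-space S
   is log_p |S|). *)
Definition kappa_of p a b (C : {set amb p a b}) : nat :=
  logn p #|[set c.1 | c in [set c in C | anat c p == azero p a b]]|.

(* Gray map phi : Z_{p^2} -> Z_p^p,
   phi(theta)_k = theta'' + theta' * k  with theta = theta'' p + theta'. *)
Definition gray (p : nat) (t : 'Z_(p ^ 2)) : 'rV['F_p]_p :=
  \row_(k < p) (((val t) %/ p + ((val t) %% p) * k)%N)%:R.

Definition Phi p a b (c : amb p a b) : 'rV['F_p]_(a + b * p) :=
  row_mx c.1 (mxvec (\matrix_(j < b, k < p) @gray p (c.2 0 j) 0 k)).

Definition Phi_set p a b (C : {set amb p a b}) : {set 'rV['F_p]_(a + b * p)} :=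
  [set Phi c | c in C].

Definition kernel n p (C : {set 'rV['F_p]_n}) : {set 'rV['F_p]_n} :=
  [set x | [set c + x | c in C] == C].

Definition ker_dim n p (C : {set 'rV['F_p]_n}) : nat := logn p #|kernel C|.

From HB Require Import structures.
From mathcomp Require Import all_boot all_order all_algebra.
From mathcomp Require Import zify ring.
Set Implicit Arguments. Unset Strict Implicit. Unset Printing Implicit Defensive.
Import Order.TTheory GRing.Theory Num.Theory.
Local Open Scope ring_scope.

(* Let redp c in F_p^beta be the reduction mod p of the Z_{p^2}-part of a codeword c.
   Adding a codeword z with redp z = 0 commutes with Phi, so Phi z lies in the kernel
   K and codewords with equal redp have Phi-images in the same coset of K. As redp c is
   a linear function of Phi c, the redp-values of kernel words form a subspace R, and
   Phi x, Phi y lie in the same coset iff redp x - redp y is in R. Rows v_(s 1), ...,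
   v_(s r) whose redp-values form a basis of the span of all redp (v j) modulo R give
   p^r distinct cosets covering Phi(C); hence |Phi(C)| = p^r |K|, ker = gamma + 2 delta
   - r, and r = kb. *)

Section ZpSquare.

Variable p : nat.
Hypothesis p_pr : prime p.

Let p_gt1 : (1 < p)%N := prime_gt1 p_pr.
Let p_gt0 : (0 < p)%N := prime_gt0 p_pr.

Lemma Zp2_cast : (Zp_trunc (p ^ 2)).+2 = (p ^ 2)%N.
Proof. by rewrite Zp_cast // (ltn_exp2l 0 2 p_gt1). Qed.

Lemma ltn_val_Zp2 (x : 'Z_(p ^ 2)) : (val x < p ^ 2)%N.
Proof. by case: x => /= x; rewrite Zp2_cast. Qed.

Lemma val_Zp2D (x y : 'Z_(p ^ 2)) : val (x + y) = ((val x + val y) %% p ^ 2)%N.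
Proof. by rewrite /=; congr (_ %% _)%N; apply: Zp2_cast. Qed.

Lemma val_Zp2Mn (x : 'Z_(p ^ 2)) n : val (x *+ n) = ((val x * n) %% p ^ 2)%N.
Proof. by rewrite Zp_mulrn /=; congr (_ %% _)%N; apply: Zp2_cast. Qed.

Lemma Fp_natE (c : 'F_p) : (val c)%:R = c.
Proof.
by apply: val_inj; rewrite /= val_Fp_nat // modn_small // -[p in (_ < p)%N]Fp_cast.
Qed.

Lemma Fp_nat_dvd n : (p %| n)%N -> n%:R = 0 :> 'F_p.
Proof. by rewrite -(Fp_nat_mod p_pr) => /eqP ->. Qed.

Lemma Fp_nat_inj m n : (m < p)%N -> (n < p)%N -> m%:R = n%:R :> 'F_p -> m = n.
Proof. by move=> ltmp ltnp /(congr1 val); rewrite /= !val_Fp_nat // !modn_small. Qed.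

Lemma gray_addr (t w : 'Z_(p ^ 2)) : (p %| val w)%N -> gray (t + w) = gray t + gray w.
Proof.
move=> dvd_pw; apply/rowP => k; rewrite !mxE val_Zp2D.
have div_modp2 n : (n %% p ^ 2 %/ p = n %/ p %% p)%N by rewrite -mulnn -modn_divl.
have mod_modp2 n : (n %% p ^ 2 = n %[mod p])%N by apply: modn_dvdm; rewrite dvdn_exp.
rewrite div_modp2 mod_modp2 divnDr // !natrD !natrM !(Fp_nat_mod p_pr) !natrD.
by rewrite (Fp_nat_dvd dvd_pw); ring.
Qed.

Lemma Fp_val_Zp2D (x y : 'Z_(p ^ 2)) :
  (val (x + y))%:R = (val x)%:R + (val y)%:R :> 'F_p.
Proof.
rewrite val_Zp2D -(Fp_nat_mod p_pr) modn_dvdm ?dvdn_exp // Fp_nat_mod //.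
exact: natrD.
Qed.

Lemma gray_inj : injective (@gray p).
Proof.
move=> t w eq_tw.
have /(congr1 (fun r : 'rV['F_p]_p => r 0 (Ordinal p_gt0))) := eq_tw.
have /(congr1 (fun r : 'rV['F_p]_p => r 0 (Ordinal p_gt1))) := eq_tw.
rewrite !mxE /= !muln0 !addn0 !muln1 !natrD => + eq_div.
rewrite eq_div => /addrI eq_mod.
have ltn_div (x : 'Z_(p ^ 2)) : (val x %/ p < p)%N.
  by rewrite ltn_divLR // mulnn ltn_val_Zp2.
have := Fp_nat_inj (ltn_div t) (ltn_div w) eq_div.
have := Fp_nat_inj (ltn_pmod _ p_gt0) (ltn_pmod _ p_gt0) eq_mod.
by move=> eq_m eq_d; apply: val_inj; rewrite /= (divn_eq (val t) p) eq_m eq_d -divn_eq.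
Qed.

End ZpSquare.

Section Ambient.

Variables (p a b : nat).
Implicit Types (x y z : amb p a b) (C : {set amb p a b}).

Lemma aaddN x : aadd x (aopp x) = azero p a b.
Proof. by congr pair; apply: subrr. Qed.

Lemma aaddNKr x y : aadd y (aadd x (aopp y)) = x.
Proof. by case: x => x1 x2; congr pair; rewrite /= addrC subrK. Qed.

Lemma aopp_opp x : aopp (aopp x) = x.
Proof. by case: x => x1 x2; congr pair; apply: opprK. Qed.

Lemma anatS x n : anat x n.+1 = aadd x (anat x n).
Proof. by congr pair; apply: mulrS. Qed.

Lemma aaddE x y : aadd x y = (x : 'rV['F_p]_a * 'rV['Z_(p ^ 2)]_b) + y.
Proof. by []. Qed.

Lemma big_aaddE n (F : 'I_n -> amb p a b) :
  \big[@aadd p a b/azero p a b]_(i < n) F i =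
  \sum_(i < n) (F i : 'rV['F_p]_a * 'rV['Z_(p ^ 2)]_b).
Proof. by []. Qed.

Lemma anatE x n : anat x n = (x : 'rV['F_p]_a * 'rV['Z_(p ^ 2)]_b) *+ n.
Proof. by elim: n => // n IHn; rewrite anatS mulrS IHn. Qed.

Section AdditiveCode.

Variable C : {set amb p a b}.
Hypothesis C_code : additive_code C.

Lemma code0 : azero p a b \in C.
Proof. by case: C_code. Qed.

Lemma code_sub x y : x \in C -> y \in C -> aadd x (aopp y) \in C.
Proof. by case: C_code => _; apply. Qed.

Lemma code_add x y : x \in C -> y \in C -> aadd x y \in C.
Proof.
move=> Cx Cy; rewrite -[y]aopp_opp; apply: code_sub => //.
have := code_sub code0 Cy; congr (_ \in C); case: y {Cy} => y1 y2.
by congr pair; apply: add0r.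
Qed.

Lemma code_nat x n : x \in C -> anat x n \in C.
Proof.
by move=> Cx; elim: n => [|n IHn]; [exact: code0 | rewrite anatS code_add].
Qed.

Lemma code_sum n (F : 'I_n -> amb p a b) :
  (forall i, F i \in C) -> \big[@aadd p a b/azero p a b]_(i < n) F i \in C.
Proof.
by move=> CF; apply: (big_ind (fun x => x \in C)) => //; [exact: code0 | exact: code_add].
Qed.

End AdditiveCode.

End Ambient.

Definition redp p a b (c : amb p a b) : 'rV['F_p]_b := \row_j (val (c.2 0 j))%:R.

(* The Gray image of theta = theta'' p + theta' is the progression
   k |-> theta'' + theta' k, so two consecutive coordinates recover theta mod p. *)
Definition gray_diff p a b (k0 k1 : 'I_p) (w : 'rV['F_p]_(a + b * p)) : 'rV['F_p]_b :=
  \row_j (w 0 (rshift a (mxvec_index j k1)) - w 0 (rshift a (mxvec_index j k0))).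

Section GrayImage.

Variables (p a b : nat).
Hypothesis p_pr : prime p.
Implicit Types (x y z : amb p a b).

Lemma redpD x y : redp (aadd x y) = redp x + redp y.
Proof. by apply/rowP => j; rewrite !mxE Fp_val_Zp2D. Qed.

Lemma redp0 : redp (azero p a b) = 0.
Proof. by apply/rowP => j; rewrite !mxE. Qed.

Lemma redpN x : redp (aopp x) = - redp x.
Proof. by apply/eqP; rewrite -addr_eq0 addrC -redpD aaddN redp0. Qed.

Lemma redpMn x n : redp (anat x n) = redp x *+ n.
Proof. by elim: n => [|n IHn]; rewrite ?redp0 // anatS redpD IHn mulrS. Qed.

Lemma redp_sum n (F : 'I_n -> amb p a b) :
  redp (\big[@aadd p a b/azero p a b]_(i < n) F i) = \sum_(i < n) redp (F i).
Proof. exact: (big_morph (@redp p a b) redpD redp0). Qed.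

Lemma redp_eq0_dvd z : redp z = 0 -> forall j, (p %| val (z.2 0%R j))%N.
Proof.
move=> z0 j; have /(congr1 val) := congr1 (fun r : 'rV_b => r 0 j) z0.
by rewrite !mxE /= val_Fp_nat // => /eqP.
Qed.

Lemma redp_order_p x : anat x p = azero p a b -> redp x = 0.
Proof.
move=> /(congr1 snd) /= xp0; apply/rowP => j; rewrite !mxE.
have /(congr1 val) := congr1 (fun A : 'rV_b => A 0 j) xp0.
have dvd_mulp n : (p ^ 2 %| n * p)%N -> (p %| n)%N.
  by rewrite -mulnn dvdn_pmul2r ?prime_gt0.
rewrite /= mulmxnE mxE val_Zp2Mn // => /eqP/dvd_mulp.
exact: Fp_nat_dvd.
Qed.

Lemma Phi_addr x z : redp z = 0 -> Phi (aadd x z) = Phi x + Phi z.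
Proof.
move=> z0; rewrite /Phi add_row_mx -linearD /=; congr (row_mx _ (mxvec _)).
apply/matrixP => j k; rewrite !mxE.
by have /rowP/(_ k) := gray_addr p_pr (x.2 0 j) (redp_eq0_dvd z0 j); rewrite !mxE.
Qed.

Lemma Phi_inj : injective (@Phi p a b).
Proof.
move=> [x1 x2] [y1 y2] /eq_row_mx [/= -> /(can_inj (@mxvecK _ _ _)) eq_gray].
congr pair; apply/rowP => j; apply: (gray_inj p_pr); apply/rowP => k.
by have := congr1 (fun M : 'M_(b, p) => M j k) eq_gray; rewrite /= !mxE.
Qed.

Lemma gray_diffD k0 k1 (w1 w2 : 'rV['F_p]_(a + b * p)) :
  gray_diff k0 k1 (w1 + w2) = gray_diff k0 k1 w1 + gray_diff k0 k1 w2.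
Proof. by apply/rowP => j; rewrite !mxE addrACA opprD. Qed.

Lemma gray_diffN k0 k1 (w : 'rV['F_p]_(a + b * p)) :
  gray_diff k0 k1 (- w) = - gray_diff k0 k1 w.
Proof. by apply/rowP => j; rewrite !mxE opprB addrC opprK. Qed.

Lemma gray_diff_Phi (k0 k1 : 'I_p) x :
  val k1 = (val k0).+1 -> gray_diff k0 k1 (Phi x) = redp x.
Proof.
move=> k1E; apply/rowP => j; rewrite mxE /Phi !row_mxEr !mxvecE !mxE k1E.
by rewrite mulnS addnCA natrD addrK Fp_nat_mod.
Qed.

End GrayImage.

Section Kernel.

Variables (n p : nat) (C : {set 'rV['F_p]_n}).

Lemma mem_addr_kernel k c : k \in kernel C -> c \in C -> c + k \in C.
Proof. by rewrite inE => /eqP {2}<- Cc; apply: imset_f. Qed.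

Lemma mem_kernel k : (forall c, c \in C -> c + k \in C) -> k \in kernel C.
Proof.
move=> Ck; rewrite inE eqEcard card_imset ?leqnn ?andbT; last exact: addIr.
by apply/subsetP => _ /imsetP [c Cc ->]; apply: Ck.
Qed.

Lemma kernel0 : 0 \in kernel C.
Proof. by apply: mem_kernel => c; rewrite addr0. Qed.

Lemma kernelD k1 k2 : k1 \in kernel C -> k2 \in kernel C -> k1 + k2 \in kernel C.
Proof.
by move=> K1 K2; apply: mem_kernel => c Cc; rewrite addrA !mem_addr_kernel.
Qed.

Lemma kernelN k : k \in kernel C -> - k \in kernel C.
Proof.
move=> Kk; apply: mem_kernel => c; move: Kk; rewrite inE => /eqP {1}<-.
by case/imsetP => d Cd ->; rewrite addrK.
Qed.

Lemma kernelB k1 k2 : k1 \in kernel C -> k2 \in kernel C -> k1 - k2 \in kernel C.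
Proof. by move=> K1 K2; rewrite kernelD ?kernelN. Qed.

End Kernel.

Lemma card_bigcup_cosets (V : finZmodType) (I : finType) (K : {set V}) (f : I -> V) :
  {in K &, forall x y, x - y \in K} -> (forall i j, f i - f j \in K -> i = j) ->
  #|\bigcup_i [set z + f i | z in K]| = (#|I| * #|K|)%N.
Proof.
move=> KB f_inj.
have -> : \bigcup_i [set z + f i | z in K] =
          [set q.2 + f q.1 | q in setX [set: I] K].
  apply/setP => c; apply/bigcupP/imsetP => [[i _ /imsetP [z Kz ->]]|[[i z]]].
    by exists (i, z); rewrite ?in_setX ?in_setT.
  by rewrite in_setX => /andP [_ Kz] ->; exists i => //; apply: imset_f.
rewrite card_in_imset ?cardsX ?cardsT // => -[i z] [j t] /=.
rewrite !in_setX => /andP [_ Kz] /andP [_ Kt] eq_zt.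
have eq_ij : i = j.
  by apply: f_inj; rewrite -(addKr z (f i)) eq_zt addrA addrK addrC KB.
by move: eq_zt; rewrite eq_ij => /addIr ->.
Qed.

Definition set_mx (F : finType) n (S : {set 'rV[F]_n}) : 'M[F]_(#|S|, n) :=
  \matrix_(i < #|S|) enum_val i.

Lemma set_mxP p n (S : {set 'rV['F_p]_n}) : prime p ->
  0 \in S -> {in S &, forall x y, x + y \in S} ->
  forall t, (t <= set_mx S)%MS = (t \in S).
Proof.
move=> p_pr S0 SD t; apply/idP/idP => [/submxP [D ->] | St]; last first.
  by apply: (eq_row_sub (enum_rank_in St t)); rewrite rowK enum_rankK_in.
rewrite mulmx_sum_row; apply: (big_ind (fun x => x \in S)) => // i _.
rewrite -(Fp_natE p_pr (D 0 i)) scaler_nat rowK.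
by elim: (val _) => [|m IHm]; rewrite ?mulr0n // mulrS SD ?enum_valP.
Qed.

Lemma rowsub_basis_mod (F : fieldType) d n m (M : 'M[F]_(d, n)) (T : 'M[F]_(m, n)) :
  exists r (s : 'I_r -> 'I_d), [/\ injective s,
   forall a : 'rV_r, (a *m rowsub s M <= T)%MS -> a = 0 &
   forall c : 'rV_d, exists a : 'rV_r, (c *m M - a *m rowsub s M <= T)%MS].
Proof.
pose Q := M *m cokermx T.
have subsQ : rowsub (maxrankfun Q) M *m cokermx T = rowsub (maxrankfun Q) Q.
  by rewrite mul_rowsub_mx.
exists (\rank Q), (maxrankfun Q); split; first exact: maxrankfun_inj.
  move=> a; rewrite submxE -mulmxA subsQ => /eqP aQ0.
  by apply: (row_free_inj (maxrowsub_free Q)); rewrite /= aQ0 mul0mx.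
move=> c; have /submxP [a cQ] : (c *m Q <= rowsub (maxrankfun Q) Q)%MS.
  by rewrite (eq_maxrowsub Q) submxMl.
by exists a; rewrite submxE mulmxBl -!mulmxA subsQ cQ subrr.
Qed.

Section GeneratorMatrix.

Variables (p a b g d : nat).
Hypothesis p_pr : prime p.
Variables (C : {set amb p a b}) (u : 'I_g -> amb p a b) (v : 'I_d -> amb p a b).
Hypothesis C_gen : generator_matrix C u v.

Lemma gen_row_mem j : v j \in C.
Proof.
have [_ [_ [C_span _]]] := C_gen; apply/C_span.
exists [ffun => 0], [ffun i => if i == j then 1 else 0].
have val_Zp2_1 : val (1 : 'Z_(p ^ 2)) = 1%N by [].
rewrite /gen_comb aaddE !big_aaddE big1 => [|i _]; last by rewrite ffunE anatE.
rewrite (bigD1 j) //= big1 => [|i /negPf ij]; last by rewrite ffunE ij anatE.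
by rewrite ffunE eqxx val_Zp2_1 anatE add0r addr0; case: (v j).
Qed.

Lemma card_gen_code : #|C| = (p ^ (g + 2 * d))%N.
Proof.
have [_ [_ [C_span comb_inj]]] := C_gen.
pose coeffs := [set: {ffun 'I_g -> 'F_p} * {ffun 'I_d -> 'Z_(p ^ 2)}].
have -> : C = [set gen_comb u v q.1 q.2 | q in coeffs].
  apply/setP => c; apply/idP/imsetP => [/C_span [lam [nu ->]]|[[lam nu] _ ->]].
    by exists (lam, nu).
  by apply/C_span; exists lam, nu.
rewrite card_in_imset => [|[l1 n1] [l2 n2] _ _ /= /comb_inj [-> ->] //].
rewrite /coeffs cardsT card_prod !card_ffun card_Fp // !card_ord Zp2_cast //.
by rewrite expnD expnM.
Qed.

Lemma redp_gen_code x : x \in C -> exists c : 'rV_d, redp x = c *m \matrix_j redp (v j).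
Proof.
have [u_ord [_ [C_span _]]] := C_gen.
case/C_span => lam [nu ->]; exists (\row_j (val (nu j))%:R).
rewrite redpD // !redp_sum // big1 ?add0r => [|i _]; last first.
  by rewrite redpMn // (redp_order_p p_pr (u_ord i).2.1) mul0rn.
rewrite mulmx_sum_row; apply: eq_bigr => j _.
by rewrite redpMn // -scaler_nat rowK mxE.
Qed.

End GeneratorMatrix.

Lemma logn_cofactor p n r m : prime p -> (p ^ n = p ^ r * m)%N -> logn p m = (n - r)%N.
Proof.
move=> p_pr eq_pn; have p_gt0 := prime_gt0 p_pr.
have : (0 < p ^ r * m)%N by rewrite -eq_pn expn_gt0 p_gt0.
rewrite muln_gt0 => /andP [_ m_gt0].
have := congr1 (logn p) eq_pn.
by rewrite lognM ?expn_gt0 ?p_gt0 // !pfactorK // => ->; rewrite addKn.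
Qed.

Section CosetDecomposition.

Variables (p alpha beta gamma delta : nat).
Hypothesis p_pr : prime p.
Variables (Cc : {set amb p alpha beta})
  (u : 'I_gamma -> amb p alpha beta) (v : 'I_delta -> amb p alpha beta).
Hypotheses (Cc_code : additive_code Cc) (Cc_gen : generator_matrix Cc u v).
Implicit Types x y z : amb p alpha beta.

Local Notation C := (Phi_set Cc).
Local Notation K := (kernel C).

Let k0 : 'I_p := Ordinal (prime_gt0 p_pr).
Let k1 : 'I_p := Ordinal (prime_gt1 p_pr).
Let redK := gray_diff k0 k1 @: K.
Let Mv := \matrix_j redp (v j).

Let gray_diff_Phi01 x : gray_diff k0 k1 (Phi x) = redp x.
Proof. exact: gray_diff_Phi. Qed.

Lemma Phi_kernel_redp0 z : z \in Cc -> redp z = 0 -> Phi z \in K.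
Proof.
move=> Cz z0; apply: mem_kernel => _ /imsetP [x Cx ->].
by rewrite -Phi_addr // imset_f // code_add.
Qed.

Lemma Phi_subr_kernel_redp_eq x y :
  x \in Cc -> y \in Cc -> redp x = redp y -> Phi x - Phi y \in K.
Proof.
move=> Cx Cy eq_xy; have Cz : aadd x (aopp y) \in Cc by apply: code_sub.
have z0 : redp (aadd x (aopp y)) = 0 by rewrite redpD // redpN // eq_xy subrr.
by rewrite -{1}(aaddNKr x y) Phi_addr // addrC addKr Phi_kernel_redp0.
Qed.

Lemma Phi_subr_kernel x y :
  x \in Cc -> y \in Cc -> redp x - redp y \in redK -> Phi x - Phi y \in K.
Proof.
move=> Cx Cy /imsetP [k Kk eq_k].
have /imsetP [w Cw eq_w] : Phi y + k \in C by rewrite mem_addr_kernel ?imset_f.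
have eq_xw : redp x = redp w.
  rewrite -[redp w]gray_diff_Phi01 -eq_w gray_diffD gray_diff_Phi01 -eq_k.
  by rewrite addrC subrK.
have -> : Phi x - Phi y = (Phi x - Phi w) + k by rewrite -eq_w opprD addrA subrK.
by rewrite kernelD ?Phi_subr_kernel_redp_eq.
Qed.

Lemma redK_row_space t : (t <= set_mx redK)%MS = (t \in redK).
Proof.
apply: set_mxP => //.
  by apply/imsetP; exists 0; [exact: kernel0 | apply/rowP => j; rewrite !mxE subrr].
move=> _ _ /imsetP [k K_k ->] /imsetP [k' K_k' ->].
by rewrite -gray_diffD imset_f ?kernelD.
Qed.

Section Basis.

Variables (r : nat) (s : 'I_r -> 'I_delta).
Hypothesis s_free : forall a : 'rV_r, (a *m rowsub s Mv <= set_mx redK)%MS -> a = 0.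
Hypothesis s_span :
  forall c : 'rV_delta, exists a : 'rV_r, (c *m Mv - a *m rowsub s Mv <= set_mx redK)%MS.

Let comb (a : {ffun 'I_r -> 'F_p}) : amb p alpha beta :=
  \big[@aadd p alpha beta/azero p alpha beta]_(i < r) anat (v (s i)) (val (a i)).

Let comb_mem a : comb a \in Cc.
Proof. by apply: code_sum => // i; rewrite code_nat // (gen_row_mem Cc_gen). Qed.

Let redp_comb a : redp (comb a) = \row_i a i *m rowsub s Mv.
Proof.
rewrite redp_sum // mulmx_sum_row; apply: eq_bigr => i _.
by rewrite redpMn // row_rowsub rowK !mxE -scaler_nat Fp_natE.
Qed.

Lemma Phi_comb_inj a a' : Phi (comb a) - Phi (comb a') \in K -> a = a'.
Proof.
move=> K_aa'; have : ((\row_i a i - \row_i a' i) *m rowsub s Mv <= set_mx redK)%MS.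
  rewrite redK_row_space mulmxBl -!redp_comb -!gray_diff_Phi01.
  by rewrite -gray_diffN -gray_diffD imset_f.
move/s_free/rowP => eq_aa'; apply/ffunP => i.
by apply/eqP; rewrite -subr_eq0; have := eq_aa' i; rewrite !mxE => ->.
Qed.

Lemma Phi_set_cover : C = \bigcup_a [set z + Phi (comb a) | z in K].
Proof.
apply/setP => c; apply/idP/bigcupP => [/imsetP [x Cx ->] | [a _ /imsetP [z Kz ->]]].
  have [cx redp_x] := redp_gen_code p_pr Cc_gen Cx.
  have [a' span_x] := s_span cx.
  pose a := [ffun i => a' 0 i].
  have a'E : a' = \row_i a i by apply/rowP => i; rewrite !mxE ffunE.
  exists a => //; apply/imsetP; exists (Phi x - Phi (comb a)); last by rewrite subrK.
  by rewrite Phi_subr_kernel // redp_comb redp_x -a'E -redK_row_space.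
by rewrite addrC mem_addr_kernel ?imset_f.
Qed.

Lemma Phi_basis_notin_kernel i : Phi (v (s i)) \notin K.
Proof.
apply/negP => K_vi; have : ((delta_mx 0 i : 'rV_r) *m rowsub s Mv <= set_mx redK)%MS.
  rewrite redK_row_space -rowE row_rowsub rowK -gray_diff_Phi01 imset_f //.
by move/s_free/matrixP/(_ 0 i)/eqP; rewrite !mxE !eqxx oner_eq0.
Qed.

Lemma card_Phi_set : #|C| = (p ^ r * #|K|)%N.
Proof.
rewrite {1}Phi_set_cover card_bigcup_cosets ?card_ffun ?card_Fp ?card_ord //.
  by move=> k k' Kk Kk'; rewrite kernelB.
exact: Phi_comb_inj.
Qed.

End Basis.

Lemma Phi_set_decomposition :
  exists r (s : 'I_r -> 'I_delta), [/\ injective s,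
    ker_dim C = (gamma + 2 * delta - r)%N,
    forall i, Phi (v (s i)) \notin K &
    C = \bigcup_(a : {ffun 'I_r -> 'F_p})
          [set z + Phi (\big[@aadd p alpha beta/azero p alpha beta]_(i < r)
                          anat (v (s i)) (val (a i))) | z in K]].
Proof.
have [r [s [s_inj s_free s_span]]] := rowsub_basis_mod Mv (set_mx redK).
exists r, s; split=> //; last exact: Phi_set_cover.
  apply: logn_cofactor => //; rewrite -(card_Phi_set s_free s_span).
  by rewrite card_in_imset ?(card_gen_code p_pr Cc_gen) // => x y _ _; apply: Phi_inj.
exact: Phi_basis_notin_kernel.
Qed.

End CosetDecomposition.

Unset Implicit Arguments.

Theorem proposition11 (p : nat) (pp : prime p) (p_gt2 : (2 < p)%N)
  (alpha beta gamma delta kappa : nat) (Cc : {set amb p alpha beta})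
  (u : 'I_gamma -> amb p alpha beta) (v : 'I_delta -> amb p alpha beta)
  (kb : nat) :
  additive_code Cc ->
  generator_matrix Cc u v ->
  kappa = kappa_of Cc ->
  (1 <= kb <= delta)%N ->
  ker_dim (Phi_set Cc) = (gamma + 2 * delta - kb)%N ->
  exists s : 'I_kb -> 'I_delta,
    injective s /\
    (forall i, Phi (v (s i)) \notin kernel (Phi_set Cc)) /\
    Phi_set Cc =
      \bigcup_(a : {ffun 'I_kb -> 'F_p})
        [set z + Phi (\big[@aadd p alpha beta/azero p alpha beta]_(i < kb)
                         anat (v (s i)) (val (a i))) | z in kernel (Phi_set Cc)].
Proof.
move=> Cc_code Cc_gen _ /andP [_ kb_le] ker_kb.
have [r [s [s_inj ker_r notin_K cover]]] := Phi_set_decomposition pp Cc_code Cc_gen.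
have r_le : (r <= delta)%N by rewrite -[r]card_ord -[delta]card_ord (leq_card s).
have -> : kb = r by lia.
by exists s.
Qed.
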